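(* Every Steiner $3$-regular liner $X$ is $p$-parallel for some $p\in\{0,1\}$. Consequently, $X$ is projective or affine.
   Context: A liner is a set $X$ of points with a family of subsets called lines such that any two distinct points lie in a unique line and every line contains at least two points. For distinct $x,y$, $\overline{xy}$ is the line through them and $\overline{xx}:=\{x\}$. A set is flat if it contains $\overline{xy}$ for all its distinct points; $\overline A$ is the smallest flat containing $A$; the rank $\|A\|$ is the smallest cardinality of $B\subseteq X$ with $A\subseteq\overline B$; a plane is a flat of rank 3. $X$ is Steiner if every line has exactly three points. $X$ is $3$-regular if for every $A\subseteq X$ with $|A|<3$ and points $o\in\overline A$, $p\in X\setminus\overline A$, we have $\overline{\{p\}\cup A}=\bigcup_{u\in\overline{op}}\bigcup_{a\in\overline A}\overline{ua}$. For a cardinal $\kappa$, $X$ is $\kappa$-parallel if for every plane $P$, line $L\subseteq P$ and point $x\in P\setminus L$ there exist exactly $\kappa$ lines $\Lambda$ with $x\in\Lambda\subseteq P\setminus L$. $X$ is projective if for all $o,x,y\in X$, $p\in\overline{xy}$ and $v\in\overline{oy}\setminus\{p\}$ we have $\overline{vp}\cap\overline{ox}\neq\varnothing$. $X$ is affine if for all $o,x,y\in X$ and $p\in\overline{xy}\setminus\overline{ox}$ there exists $u\in\overline{oy}$ such that for every $v\in\overline{oy}$: $u=v$ iff $\overline{vp}\cap\overline{ox}=\varnothing$. *)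

From Stdlib Require Import List.
Import ListNotations.

Section Liner.
Variable X : Type.
Variable lines : (X -> Prop) -> Prop.

Definition seteq (A B : X -> Prop) : Prop := forall x, A x <-> B x.
Definition subset (A B : X -> Prop) : Prop := forall x, A x -> B x.

Definition is_liner : Prop :=
  (forall x y, x <> y ->
     exists L, lines L /\ L x /\ L y /\
       forall L', lines L' -> L' x -> L' y -> seteq L' L) /\
  (forall L, lines L -> exists x y, x <> y /\ L x /\ L y).

Definition line (x y : X) : X -> Prop :=
  fun z => (x = y /\ z = x) \/ (x <> y /\ exists L, lines L /\ L x /\ L y /\ L z).

Definition flat (F : X -> Prop) : Prop :=
  forall x y, F x -> F y -> x <> y -> subset (line x y) F.

Definition closure (A : X -> Prop) : X -> Prop :=
  fun z => forall F, flat F -> subset A F -> F z.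

Definition of_list (l : list X) : X -> Prop := fun x => In x l.

Definition has_rank (A : X -> Prop) (n : nat) : Prop :=
  (exists l : list X, NoDup l /\ length l = n /\ subset A (closure (of_list l))) /\
  (forall l : list X, length l < n -> ~ subset A (closure (of_list l))).

Definition plane (P : X -> Prop) : Prop := flat P /\ has_rank P 3.

Definition steiner : Prop :=
  forall L, lines L -> exists a b c, a <> b /\ a <> c /\ b <> c /\
    seteq L (fun z => z = a \/ z = b \/ z = c).

(* 3-regular: every A with |A| < 3 is the set of elements of a list of length < 3. *)
Definition regular3 : Prop :=
  forall (l : list X) (o p : X), length l < 3 ->
    let A := of_list l in
    closure A o -> ~ closure A p ->
    seteq (closure (fun z => z = p \/ A z))
          (fun z => exists u a, line o p u /\ closure A a /\ line u a z).

(* "there exist exactly k sets satisfying Q" (sets counted up to extensional equality) *)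
Definition exactly_k_sets (k : nat) (Q : (X -> Prop) -> Prop) : Prop :=
  exists ls : list (X -> Prop),
    length ls = k /\ (forall L, In L ls -> Q L) /\
    ForallOrdPairs (fun L1 L2 => ~ seteq L1 L2) ls /\
    (forall L, Q L -> exists L', In L' ls /\ seteq L L').

Definition k_parallel (k : nat) : Prop :=
  forall P L x, plane P -> lines L -> subset L P -> P x -> ~ L x ->
    exactly_k_sets k (fun M => lines M /\ M x /\ subset M (fun z => P z /\ ~ L z)).

Definition projective : Prop :=
  forall o x y p v, line x y p -> line o y v -> v <> p ->
    exists z, line v p z /\ line o x z.

Definition affine : Prop :=
  forall o x y p, line x y p -> ~ line o x p ->
    exists u, line o y u /\
      forall v, line o y v -> (u = v <-> ~ exists z, line v p z /\ line o x z).

End Liner.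

(* In a Steiner liner every line is {x, y, x∘y} for a commutative idempotent
   involutive operation ∘, and flats are exactly the ∘-closed sets. For a triangle a, b, p,
   3-regularity makes every point of the plane ⟨a, b, p⟩ lie on a line joining a point of ap
   to a point of ab, so the plane consists of the nine words a, b, c = ab, p, q = ap, r = pb,
   s = pc, u = qb, w = qc. Checking which third points close up shows that either u = s and
   w = r, and the plane is a Fano plane of 7 points, or all nine points are distinct, and the
   plane is an affine plane of order 3. Two planes of different types cannot share a line,
   hence, passing through intermediate planes, all planes have the same type. Fano
   planes have no parallels, giving 0-parallelism and the projective law; affine planes of
   order 3 satisfy Playfair's axiom, giving 1-parallelism and the affine law. *)
From Stdlib Require Import List Classical ClassicalEpsilon Lia.
Import ListNotations.

Section SteinerLiner.
Variable X : Type.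
Variable lines : (X -> Prop) -> Prop.
Hypothesis liner : is_liner X lines.
Hypothesis steinerX : steiner X lines.
Hypothesis regular : regular3 X lines.

Local Notation line := (line X lines).
Local Notation flat := (flat X lines).
Local Notation closure := (closure X lines).

Lemma line_unique L1 L2 u v : lines L1 -> lines L2 -> L1 u -> L1 v -> L2 u -> L2 v ->
  u <> v -> forall w, L1 w <-> L2 w.
Proof.
  intros HL1 HL2 L1u L1v L2u L2v Nuv w.
  destruct (proj1 liner u v Nuv) as [L [_ [_ [_ uniq]]]].
  pose proof (uniq L1 HL1 L1u L1v w). pose proof (uniq L2 HL2 L2u L2v w). tauto.
Qed.

Lemma line_of_neq x y : x <> y -> exists L, lines L /\ L x /\ L y /\ forall w, L w <-> line x y w.
Proof.
  intro Nxy. destruct (proj1 liner x y Nxy) as [L [HL [Lx [Ly uniq]]]].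
  exists L; repeat split; auto.
  - intro Lw. right. split; auto. exists L; auto.
  - intros [[E _]|[_ [L' [HL' [L'x [L'y L'w]]]]]]; [contradiction|].
    exact (proj1 (uniq L' HL' L'x L'y w) L'w).
Qed.

Lemma line_iff M u v : lines M -> M u -> M v -> u <> v -> forall t, M t <-> line u v t.
Proof.
  intros HM Mu Mv Nuv t. destruct (line_of_neq u v Nuv) as [L [HL [Lu [Lv EL]]]].
  rewrite <- EL. exact (line_unique M L u v HM HL Mu Mv Lu Lv Nuv t).
Qed.

Lemma line_has_third x y : x <> y ->
  exists z, z <> x /\ z <> y /\ forall w, line x y w <-> w = x \/ w = y \/ w = z.
Proof.
  intro Nxy. destruct (line_of_neq x y Nxy) as [L [HL [Lx [Ly EL]]]].
  destruct (steinerX L HL) as [a [b [c [Nab [Nac [Nbc La]]]]]].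
  assert (Labc : forall t, line x y t <-> t = a \/ t = b \/ t = c)
    by (intro t; rewrite <- EL; apply La).
  apply La in Lx; apply La in Ly.
  destruct Lx as [-> | [-> | ->]]; destruct Ly as [-> | [-> | ->]]; try congruence;
  [exists c | exists b | exists c | exists a | exists b | exists a];
  (split; [|split]); auto; intro t; rewrite Labc; tauto.
Qed.

(* [third x x = x], matching the convention [line x x = {x}]. *)
Definition third (x y : X) : X := epsilon (inhabits x)
  (fun z => (x = y /\ z = x) \/ (x <> y /\ z <> x /\ z <> y /\ line x y z)).

Lemma third_spec x y : (x = y /\ third x y = x) \/
  (x <> y /\ third x y <> x /\ third x y <> y /\ line x y (third x y)).
Proof.
  unfold third. apply epsilon_spec. destruct (classic (x = y)) as [E|Nxy].
  - exists x; left; auto.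
  - destruct (line_has_third x y Nxy) as [z [Nzx [Nzy Ez]]].
    exists z. right. repeat split; auto. apply Ez; auto.
Qed.

Lemma third_diag x : third x x = x.
Proof. destruct (third_spec x x) as [[_ E]|[E _]]; congruence. Qed.

Lemma third_neq x y : x <> y -> third x y <> x /\ third x y <> y.
Proof. intro Nxy. destruct (third_spec x y) as [[E _]|[_ [N1 [N2 _]]]]; tauto. Qed.

Lemma line_third x y w : line x y w <-> w = x \/ w = y \/ w = third x y.
Proof.
  destruct (classic (x = y)) as [<-|Nxy].
  - rewrite third_diag. unfold line. split.
    + intros [[_ E]|[E _]]; [auto|congruence].
    + intros [E|[E|E]]; left; auto.
  - destruct (line_has_third x y Nxy) as [z [Nzx [Nzy Ez]]].
    destruct (third_spec x y) as [[E _]|[_ [N1 [N2 Lt]]]]; [contradiction|].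
    apply Ez in Lt. assert (Ez3 : third x y = z) by (destruct Lt as [?|[?|?]]; congruence).
    rewrite Ez, Ez3. tauto.
Qed.

Lemma line_l a b : line a b a.
Proof. apply line_third; auto. Qed.

Lemma line_r a b : line a b b.
Proof. apply line_third; auto. Qed.

Lemma line_sym x y w : line x y w <-> line y x w.
Proof.
  unfold line; split; intros [[E F]|[E [L [HL [Lx [Ly Lw]]]]]];
    [left; subst | right; split; [|exists L] | left; subst | right; split; [|exists L]]; auto.
Qed.

Lemma third_comm x y : third x y = third y x.
Proof.
  destruct (classic (x = y)) as [<-|Nxy]; [reflexivity|].
  destruct (third_spec y x) as [[E _]|[_ [N1 [N2 Lt]]]]; [congruence|].
  apply line_sym, line_third in Lt. destruct Lt as [?|[?|?]]; congruence.
Qed.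

Lemma third_invol x y : third x (third x y) = y.
Proof.
  destruct (classic (x = y)) as [<-|Nxy]; [rewrite !third_diag; reflexivity|].
  destruct (third_neq x y Nxy) as [N1 N2].
  destruct (line_of_neq x y Nxy) as [L [HL [Lx [Ly EL]]]].
  assert (Lz : L (third x y)) by (apply EL, line_third; auto).
  assert (Lzz : L (third x (third x y))).
  { apply (line_iff L x (third x y)); auto. apply line_third; auto. }
  apply EL, line_third in Lzz. destruct (third_neq x (third x y) (not_eq_sym N1)).
  destruct Lzz as [?|[?|?]]; congruence.
Qed.

(* Closes goals that follow by congruence from the quasigroup laws [third x x = x],
   [third x y = third y x] and [third x (third x y) = y], instantiated at all points in the
   context and at the extra terms [l]. *)
Ltac add_pair_laws x l := lazymatch l with
  | nil => idtac
  | cons ?y ?t => pose proof (third_invol x y); pose proof (third_comm x y); add_pair_laws x t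
  end.
Ltac add_laws l0 l := lazymatch l with
  | nil => idtac
  | cons ?x ?t => pose proof (third_diag x); add_pair_laws x l0; add_laws l0 t
  end.
Ltac is_in x l := lazymatch l with
  | nil => constr:(false)
  | cons x _ => constr:(true)
  | cons _ ?t => is_in x t
  end.
Ltac context_points acc := match goal with
  | x : X |- _ => lazymatch is_in x acc with false => context_points (cons x acc) end
  | _ => acc
  end.
Ltac steiner_with l := let ps := context_points l in solve [add_laws ps ps; congruence].
Ltac steiner := steiner_with (@nil X).
Ltac steiner3_with l :=
  first [left; steiner_with l | right; left; steiner_with l | right; right; steiner_with l].
Ltac steiner3 := steiner3_with (@nil X).

Lemma line_two_points M : lines M -> exists u v, u <> v /\ M u /\ M v.
Proof. apply (proj2 liner). Qed.

Lemma line_other_point M x : lines M -> exists m, M m /\ m <> x.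
Proof.
  intro HM. destruct (line_two_points M HM) as [u [v [Nuv [Mu Mv]]]].
  destruct (classic (u = x)); [exists v | exists u]; split; congruence.
Qed.

Lemma line_eq_of_common a b c d u v t : a <> b -> c <> d -> u <> v ->
  line a b u -> line a b v -> line c d u -> line c d v -> line c d t -> line a b t.
Proof.
  intros Nab Ncd Nuv abu abv cdu cdv cdt.
  destruct (line_of_neq a b Nab) as [L1 [HL1 [_ [_ E1]]]].
  destruct (line_of_neq c d Ncd) as [L2 [HL2 [_ [_ E2]]]].
  apply E1. apply (line_unique L2 L1 u v); auto;
    [apply E2 | apply E2 | apply E1 | apply E1 | apply E2]; auto.
Qed.

Lemma flat_iff_third F : flat F <-> forall x y, F x -> F y -> F (third x y).
Proof.
  split.
  - intros HF x y Fx Fy. destruct (classic (x = y)) as [<-|Nxy]; [rewrite third_diag; auto|].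
    apply (HF x y Fx Fy Nxy). apply line_third; auto.
  - intros HF x y Fx Fy _ z Hz. apply line_third in Hz. destruct Hz as [-> | [-> | ->]]; auto.
Qed.

Lemma closure_third A x y : closure A x -> closure A y -> closure A (third x y).
Proof. intros Hx Hy F HF HA. apply (proj1 (flat_iff_third F) HF); [apply Hx | apply Hy]; auto. Qed.

Lemma closure_third_eq A x y z : closure A x -> closure A y -> z = third x y -> closure A z.
Proof. intros Hx Hy ->. apply closure_third; auto. Qed.

Lemma closure_line A u v w : closure A u -> closure A v -> line u v w -> closure A w.
Proof.
  intros Hu Hv Hw. apply line_third in Hw.
  destruct Hw as [-> | [-> | ->]]; auto. apply closure_third; auto.
Qed.

Lemma closure_incl (A : X -> Prop) x : A x -> closure A x.
Proof. intros Ax F HF HA. apply HA; auto. Qed.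

Lemma closure_min (A F : X -> Prop) : flat F -> subset X A F -> subset X (closure A) F.
Proof. intros HF HA x Hx. apply Hx; auto. Qed.

Lemma closure_flat A : flat (closure A).
Proof. apply flat_iff_third, closure_third. Qed.

Lemma closure_mono (A B : X -> Prop) : subset X A (closure B) -> subset X (closure A) (closure B).
Proof. apply closure_min, closure_flat. Qed.

Definition span3 a b c := closure (fun z => z = a \/ z = b \/ z = c).

Lemma mem_span3_1 a b c : span3 a b c a. Proof. apply closure_incl; auto. Qed.
Lemma mem_span3_2 a b c : span3 a b c b. Proof. apply closure_incl; auto. Qed.
Lemma mem_span3_3 a b c : span3 a b c c. Proof. apply closure_incl; auto. Qed.

Lemma span3_sub a b c a' b' c' : span3 a' b' c' a -> span3 a' b' c' b -> span3 a' b' c' c ->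
  subset X (span3 a b c) (span3 a' b' c').
Proof. intros. apply closure_mono. intros x [-> | [-> | ->]]; auto. Qed.

Lemma span3_perm a b c t :
  (span3 a b c t <-> span3 b a c t) /\ (span3 a b c t <-> span3 a c b t) /\
  (span3 a b c t <-> span3 b c a t) /\ (span3 a b c t <-> span3 c a b t) /\
  (span3 a b c t <-> span3 c b a t).
Proof.
  pose proof (mem_span3_1 a b c). pose proof (mem_span3_2 a b c). pose proof (mem_span3_3 a b c).
  repeat split; apply span3_sub; first [apply mem_span3_1 | apply mem_span3_2 | apply mem_span3_3].
Qed.

Definition noncollinear a b p := a <> b /\ p <> a /\ p <> b /\ p <> third a b.

Lemma noncollinear_perm a b c : noncollinear a b c ->
  noncollinear b a c /\ noncollinear a c b /\ noncollinear b c a /\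
  noncollinear c a b /\ noncollinear c b a.
Proof. intros [N1 [N2 [N3 N4]]]. repeat split; intro; steiner. Qed.

Lemma noncollinear_of_not_line a b p : a <> b -> ~ line a b p -> noncollinear a b p.
Proof. intros Nab Np. rewrite line_third in Np. repeat split; auto; intro; apply Np; auto. Qed.

Lemma closure_pair a b z : closure (of_list X [a; b]) z <-> z = a \/ z = b \/ z = third a b.
Proof.
  split.
  - apply (closure_min _ (fun z => z = a \/ z = b \/ z = third a b)).
    + apply flat_iff_third. intros x y Hx Hy.
      destruct Hx as [-> | [-> | ->]]; destruct Hy as [-> | [-> | ->]]; steiner3_with [third a b].
    + intros x [-> | [-> | []]]; auto.
  - intros [-> | [-> | ->]]; [| |apply closure_third]; apply closure_incl; simpl; auto.
Qed.

Definition fano_sized (P : X -> Prop) :=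
  exists l : list X, length l <= 7 /\ forall z, P z -> In z l.
Definition affine_sized (P : X -> Prop) :=
  exists l : list X, NoDup l /\ length l = 9 /\ forall z, In z l -> P z.

Lemma fano_affine_sized_excl P : fano_sized P -> affine_sized P -> False.
Proof.
  intros [l [Hl Pl]] [m [Hm [Hm' Pm]]].
  assert (length m <= length l) by (apply NoDup_incl_length; auto; intros z Hz; auto). lia.
Qed.

Lemma fano_sized_sub P Q : subset X Q P -> fano_sized P -> fano_sized Q.
Proof. intros HQP [l [Hl Pl]]. exists l; split; auto. Qed.

Lemma affine_sized_sup P Q : subset X P Q -> affine_sized P -> affine_sized Q.
Proof. intros HPQ [l [Hl [Hl' Pl]]]. exists l; repeat split; auto. Qed.

Definition frame a b c p q r s u w := noncollinear a b p /\ c = third a b /\ q = third a p /\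
  r = third p b /\ s = third p c /\ u = third q b /\ w = third q c.

Ltac destruct_frame H :=
  let Hab := fresh "Hab" in let Hpa := fresh "Hpa" in let Hpb := fresh "Hpb" in
  let Hpc := fresh "Hpc" in let Ec := fresh "Ec" in let Eq := fresh "Eq" in
  let Er := fresh "Er" in let Es := fresh "Es" in let Eu := fresh "Eu" in let Ew := fresh "Ew" in
  destruct H as [[Hab [Hpa [Hpb Hpc]]] [Ec [Eq [Er [Es [Eu Ew]]]]]].

Ltac case9 M := destruct M as [M|[M|[M|[M|[M|[M|[M|[M|M]]]]]]]].

Lemma frame_of a b p : noncollinear a b p -> frame a b (third a b) p (third a p) (third p b)
  (third p (third a b)) (third (third a p) b) (third (third a p) (third a b)).
Proof. intro H. repeat split; auto; apply H. Qed.

Section Frame.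
Variables a b c p q r s u w : X.
Hypothesis Hframe : frame a b c p q r s u w.

Lemma frame_mem_span3 : span3 a b p c /\ span3 a b p q /\ span3 a b p r /\
  span3 a b p s /\ span3 a b p u /\ span3 a b p w.
Proof.
  destruct_frame Hframe.
  pose proof (mem_span3_1 a b p). pose proof (mem_span3_2 a b p). pose proof (mem_span3_3 a b p).
  assert (span3 a b p c) by (rewrite Ec; apply closure_third; auto).
  assert (span3 a b p q) by (rewrite Eq; apply closure_third; auto).
  assert (span3 a b p r) by (rewrite Er; apply closure_third; auto).
  assert (span3 a b p s) by (rewrite Es; apply closure_third; auto).
  assert (span3 a b p u) by (rewrite Eu; apply closure_third; auto).
  assert (span3 a b p w) by (rewrite Ew; apply closure_third; auto).
  tauto.
Qed.

(* 3-regularity with [A = {a, b}] and [o = a]: every point of the plane lies on a line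
   joining a point of [ap] to a point of [ab]. *)
Lemma span3_frame_points z : span3 a b p z ->
  z = a \/ z = b \/ z = c \/ z = p \/ z = q \/ z = r \/ z = s \/ z = u \/ z = w.
Proof.
  destruct_frame Hframe. intro Hz.
  assert (Np : ~ closure (of_list X [a; b]) p).
  { rewrite closure_pair. intros [?|[?|?]]; congruence. }
  assert (Ha : closure (of_list X [a; b]) a) by (apply closure_incl; simpl; auto).
  destruct (proj1 (regular [a; b] a p ltac:(simpl; lia) Ha Np z)) as [v [e [Hv [He Hz']]]].
  - revert Hz. apply closure_mono. intros x [-> | [-> | ->]]; apply closure_incl; simpl; auto.
  - rewrite closure_pair in He. rewrite line_third in Hv, Hz'.
    destruct Hv as [-> | [-> | ->]]; destruct He as [-> | [-> | ->]];
      destruct Hz' as [-> | [-> | ->]];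
    solve [repeat (first [left; steiner | right]); steiner].
Qed.

(* In the mixed cases the points [third r s] and [third a w] (resp. [third a u]) of the plane
   cannot be any of the nine points. *)
Lemma frame_dichotomy : (u = s /\ w = r) \/ (u <> s /\ w <> r).
Proof.
  pose proof span3_frame_points as P9.
  destruct frame_mem_span3 as [mc [mq [mr [ms [mu mw]]]]].
  pose proof (mem_span3_1 a b p) as ma.
  destruct_frame Hframe.
  destruct (classic (u = s)) as [E1|E1]; destruct (classic (w = r)) as [E2|E2]; auto; exfalso.
  - assert (M := P9 (third r s) (closure_third _ _ _ mr ms)).
    assert (M2 := P9 (third a w) (closure_third _ _ _ ma mw)).
    remember (third r s) as t eqn:Et. remember (third a w) as t2 eqn:Et2.
    case9 M; try steiner; case9 M2; steiner.
  - assert (M := P9 (third r s) (closure_third _ _ _ mr ms)).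
    assert (M2 := P9 (third a u) (closure_third _ _ _ ma mu)).
    remember (third r s) as t eqn:Et. remember (third a u) as t2 eqn:Et2.
    case9 M; try steiner; case9 M2; steiner.
Qed.

Lemma frame_fano : u = s -> w = r ->
  third a r = s /\ forall z, span3 a b p z -> In z [a; b; c; p; q; r; s].
Proof.
  intros E1 E2. pose proof span3_frame_points as P9.
  destruct frame_mem_span3 as [mc [mq [mr [ms [mu mw]]]]].
  pose proof (mem_span3_1 a b p) as ma.
  destruct_frame Hframe. split.
  - assert (M := P9 (third a r) (closure_third _ _ _ ma mr)).
    remember (third a r) as t eqn:Et.
    case9 M; steiner.
  - intros z Hz. specialize (P9 z Hz). rewrite E1, E2 in P9.
    repeat (destruct P9 as [-> | P9]; [simpl; tauto|]); subst; simpl; tauto.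
Qed.

Lemma frame_affine : u <> s -> w <> r ->
  third q r = s /\ third p u = w /\ NoDup [a; b; c; p; q; r; s; u; w].
Proof.
  intros E1 E2. pose proof span3_frame_points as P9.
  destruct frame_mem_span3 as [mc [mq [mr [ms [mu mw]]]]].
  pose proof (mem_span3_3 a b p) as mp.
  destruct_frame Hframe. split; [|split].
  - assert (M := P9 (third q r) (closure_third _ _ _ mq mr)).
    remember (third q r) as t eqn:Et.
    case9 M; steiner.
  - assert (M := P9 (third p u) (closure_third _ _ _ mp mu)).
    remember (third p u) as t eqn:Et.
    case9 M; steiner.
  - repeat (constructor; [let H := fresh in intro H; simpl in H;
      repeat (destruct H as [H|H]; [steiner|]); exact H|]).
    constructor.
Qed.

Lemma frame_fano_sized : u = s -> w = r -> fano_sized (span3 a b p).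
Proof.
  intros E1 E2. exists [a; b; c; p; q; r; s]. split; [simpl; lia|]. apply frame_fano; auto.
Qed.

Lemma frame_affine_sized : u <> s -> w <> r -> affine_sized (span3 a b p).
Proof.
  intros E1 E2. exists [a; b; c; p; q; r; s; u; w]. repeat split; [apply frame_affine; auto|].
  destruct frame_mem_span3 as [mc [mq [mr [ms [mu mw]]]]].
  pose proof (mem_span3_1 a b p). pose proof (mem_span3_2 a b p). pose proof (mem_span3_3 a b p).
  intros z Hz. repeat (destruct Hz as [<- | Hz]; [auto|]). contradiction.
Qed.

End Frame.

Lemma span3_fano_or_affine a b p : noncollinear a b p ->
  fano_sized (span3 a b p) \/ affine_sized (span3 a b p).
Proof.
  intro T. pose proof (frame_of a b p T) as Fr.
  destruct (frame_dichotomy _ _ _ _ _ _ _ _ _ Fr) as [[E1 E2]|[E1 E2]];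
    [left; apply (frame_fano_sized _ _ _ _ _ _ _ _ _ Fr)
    | right; apply (frame_affine_sized _ _ _ _ _ _ _ _ _ Fr)];
    auto.
Qed.

Lemma fano_identities a b p : noncollinear a b p -> fano_sized (span3 a b p) ->
  third (third a p) b = third p (third a b) /\ third (third a p) (third a b) = third p b /\
  third a (third p b) = third p (third a b).
Proof.
  intros T F. pose proof (frame_of a b p T) as Fr.
  destruct (frame_dichotomy _ _ _ _ _ _ _ _ _ Fr) as [[E1 E2]|[E1 E2]].
  - destruct (frame_fano _ _ _ _ _ _ _ _ _ Fr E1 E2) as [E3 _]. auto.
  - exfalso. exact (fano_affine_sized_excl _ F (frame_affine_sized _ _ _ _ _ _ _ _ _ Fr E1 E2)).
Qed.

Lemma affine_identities a b p : noncollinear a b p -> affine_sized (span3 a b p) ->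
  third (third a p) (third p b) = third p (third a b) /\
  third p (third (third a p) b) = third (third a p) (third a b).
Proof.
  intros T A. pose proof (frame_of a b p T) as Fr.
  destruct (frame_dichotomy _ _ _ _ _ _ _ _ _ Fr) as [[E1 E2]|[E1 E2]].
  - exfalso. exact (fano_affine_sized_excl _ (frame_fano_sized _ _ _ _ _ _ _ _ _ Fr E1 E2) A).
  - destruct (frame_affine _ _ _ _ _ _ _ _ _ Fr E1 E2) as [E3 [E4 _]]. auto.
Qed.

Lemma span3_exchange a b p d : noncollinear a b p -> span3 a b p d -> noncollinear a b d ->
  forall t, span3 a b d t <-> span3 a b p t.
Proof.
  intros T Hd Td. split.
  - apply span3_sub; auto; [apply mem_span3_1 | apply mem_span3_2].
  - apply span3_sub; [apply mem_span3_1 | apply mem_span3_2 |].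
    pose proof (span3_frame_points _ _ _ _ _ _ _ _ _ (frame_of a b p T) d Hd) as M.
    pose proof (mem_span3_1 a b d) as ma. pose proof (mem_span3_2 a b d) as mb.
    pose proof (mem_span3_3 a b d) as md.
    pose proof (closure_third _ _ _ ma mb) as mc.
    pose proof (closure_third _ _ _ mb md) as mbd.
    pose proof (closure_third _ _ _ mc md) as mcd.
    destruct Td as [_ [D1 [D2 D3]]].
    remember (third a b) as c. remember (third a p) as q. remember (third p b) as r.
    remember (third p c) as s. remember (third q b) as u. remember (third q c) as w.
    destruct T as [Hab [Hpa [Hpb Hpc]]].
    case9 M; try (exfalso; congruence);
    first [ apply (closure_third_eq _ a d p ma md); steiner
          | apply (closure_third_eq _ b d p mb md); steiner
          | apply (closure_third_eq _ c d p mc md); steiner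
          | subst d; apply mem_span3_3
          | apply (closure_third_eq _ a (third b d) p ma mbd); steiner
          | apply (closure_third_eq _ a (third c d) p ma mcd); steiner ].
Qed.

Lemma span3_rebase_first g1 g2 g3 d : noncollinear g1 g2 g3 -> span3 g1 g2 g3 d ->
  exists h1 h2, noncollinear d h1 h2 /\ forall t, span3 d h1 h2 t <-> span3 g1 g2 g3 t.
Proof.
  intros T Hd.
  destruct (noncollinear_perm _ _ _ T) as [T1 [T2 _]].
  destruct (classic (d = g1)) as [->|N1]; [exists g2, g3; split; auto; tauto|].
  destruct (classic (d = g2)) as [->|N2].
  { exists g1, g3. split; [apply T1|]. intro t; pose proof (span3_perm g1 g2 g3 t); tauto. }
  destruct (classic (d = third g1 g2)) as [E|N3].
  - assert (Td : noncollinear g1 g3 d)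
      by (destruct T as [A [B [C D]]]; repeat split; intro; steiner).
    assert (Hd' : span3 g1 g3 g2 d)
      by (destruct (span3_perm g1 g2 g3 d) as [_ [K _]]; exact (proj1 K Hd)).
    pose proof (span3_exchange g1 g3 g2 d T2 Hd' Td) as EX.
    exists g1, g3. split; [apply (noncollinear_perm _ _ _ Td)|].
    intro t. pose proof (span3_perm d g1 g3 t). pose proof (span3_perm g1 g3 d t).
    pose proof (span3_perm g1 g2 g3 t). specialize (EX t). tauto.
  - assert (Td : noncollinear g1 g2 d) by (destruct T as [A [B [C D]]]; repeat split; auto).
    pose proof (span3_exchange g1 g2 g3 d T Hd Td) as EX.
    exists g1, g2. split; [apply (noncollinear_perm _ _ _ Td)|].
    intro t. pose proof (span3_perm d g1 g2 t). pose proof (span3_perm g1 g2 d t).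
    specialize (EX t). tauto.
Qed.

Lemma span3_rebase_second x h1 h2 y : noncollinear x h1 h2 -> span3 x h1 h2 y -> y <> x ->
  exists h, noncollinear x y h /\ forall t, span3 x y h t <-> span3 x h1 h2 t.
Proof.
  intros T Hy Nyx.
  destruct (noncollinear_perm _ _ _ T) as [_ [T2 _]].
  destruct (classic (y = h1)) as [->|N1]; [exists h2; split; auto; tauto|].
  destruct (classic (y = h2)) as [->|N2].
  { exists h1. split; auto. intro t; pose proof (span3_perm x h1 h2 t); tauto. }
  destruct (classic (y = third x h1)) as [E|N3].
  - assert (Ty : noncollinear x h2 y)
      by (destruct T as [A [B [C D]]]; repeat split; auto; intro; steiner).
    assert (Hy' : span3 x h2 h1 y)
      by (destruct (span3_perm x h1 h2 y) as [_ [K _]]; exact (proj1 K Hy)).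
    pose proof (span3_exchange x h2 h1 y T2 Hy' Ty) as EX.
    exists h2. split; [apply (noncollinear_perm _ _ _ Ty)|].
    intro t. pose proof (span3_perm x h2 y t). pose proof (span3_perm x h1 h2 t).
    specialize (EX t). tauto.
  - assert (Ty : noncollinear x h1 y) by (repeat split; auto; apply T).
    pose proof (span3_exchange x h1 h2 y T Hy Ty) as EX.
    exists h1. split; [apply (noncollinear_perm _ _ _ Ty)|].
    intro t. pose proof (span3_perm x h1 y t). specialize (EX t). tauto.
Qed.

Lemma span3_eq_of_mem a b c x y z : noncollinear a b c -> noncollinear x y z ->
  span3 a b c x -> span3 a b c y -> span3 a b c z -> forall t, span3 x y z t <-> span3 a b c t.
Proof.
  intros T Txyz mx my mz.
  destruct (span3_rebase_first a b c x T mx) as [h1 [h2 [T1 E1]]].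
  destruct (span3_rebase_second x h1 h2 y T1 (proj2 (E1 y) my) (not_eq_sym (proj1 Txyz)))
    as [h [T2 E2]].
  pose proof (span3_exchange x y h z T2 (proj2 (E2 z) (proj2 (E1 z) mz)) Txyz) as E3.
  intro t. rewrite E3, E2, E1. tauto.
Qed.

Lemma span3_eq_of_common a b c a' b' c' x y z : noncollinear a b c -> noncollinear a' b' c' ->
  noncollinear x y z -> span3 a b c x -> span3 a b c y -> span3 a b c z ->
  span3 a' b' c' x -> span3 a' b' c' y -> span3 a' b' c' z ->
  forall t, span3 a b c t <-> span3 a' b' c' t.
Proof.
  intros T T' Txyz mx my mz mx' my' mz' t.
  rewrite <- (span3_eq_of_mem a b c x y z), <- (span3_eq_of_mem a' b' c' x y z); auto. tauto.
Qed.

Lemma fano_sized_perm a b c : fano_sized (span3 a b c) ->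
  fano_sized (span3 b a c) /\ fano_sized (span3 a c b) /\ fano_sized (span3 b c a) /\
  fano_sized (span3 c a b) /\ fano_sized (span3 c b a).
Proof.
  intro F. repeat split; revert F; apply fano_sized_sub;
    intro t; pose proof (span3_perm a b c t); tauto.
Qed.

Lemma notin_span3_neq a b x z : ~ span3 a b x z -> z <> a /\ z <> b /\ z <> x /\
  z <> third a b /\ z <> third a x /\ z <> third b x.
Proof.
  intro Nz. pose proof (mem_span3_1 a b x). pose proof (mem_span3_2 a b x).
  pose proof (mem_span3_3 a b x).
  repeat split; intros ->; apply Nz; auto; apply closure_third; auto.
Qed.

Lemma not_fano_identity a x y : noncollinear y a x -> ~ fano_sized (span3 a x y) ->
  third (third y x) (third x a) = third x (third y a).
Proof.
  intros T NF. destruct (span3_fano_or_affine _ _ _ T) as [F|A].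
  - destruct NF. apply (fano_sized_perm _ _ _ F).
  - apply (affine_identities _ _ _ T A).
Qed.

Lemma fano_affine_identities_absurd a b x y : noncollinear a b x -> fano_sized (span3 a b x) ->
  ~ span3 a b x y -> third (third a y) (third y b) = third y (third a b) ->
  (forall e, line a b e -> third (third y x) (third x e) = third x (third y e)) -> False.
Proof.
  intros Tx FP Ny Q1 AG.
  pose proof (mem_span3_1 a b x) as ma. pose proof (mem_span3_2 a b x) as mb.
  pose proof (mem_span3_3 a b x) as mx.
  pose proof (closure_third _ _ _ ma mb) as mc.
  pose proof (closure_third _ _ _ mx ma) as mta. pose proof (closure_third _ _ _ mx mb) as mtb.
  pose proof (closure_third _ _ _ mx mc) as mtc.
  destruct (notin_span3_neq _ _ _ _ Ny) as [N1 [N2 [N3 [N4 [N5 N6]]]]].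
  assert (NyP : forall z, span3 a b x z -> y <> z) by (intros z Hz ->; auto).
  pose proof (NyP _ mta). pose proof (NyP _ mtb). pose proof (NyP _ mtc).
  assert (Nty : ~ span3 a b x (third x y)).
  { intro E. apply Ny. apply (closure_third_eq _ x (third x y)); auto. steiner. }
  destruct (fano_identities _ _ _ Tx FP) as [P1 [P2 P3]].
  pose proof (AG a (line_l a b)) as AG1. pose proof (AG b (line_r a b)) as AG2.
  pose proof (AG (third a b) (proj2 (line_third a b _) (or_intror (or_intror eq_refl)))) as AG3.
  destruct Tx as [Hab [Hxa [Hxb Hxc]]].
  remember (third a b) as c eqn:Ec in *.
  remember (third x y) as ty eqn:Ety in *. remember (third x a) as ta eqn:Eta in *.
  remember (third x b) as tb eqn:Etb in *. remember (third x c) as tc eqn:Etc in *.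
  remember (third y a) as a' eqn:Ea' in *. remember (third y b) as b' eqn:Eb' in *.
  remember (third y c) as c' eqn:Ec' in *.
  remember (third x a') as ta' eqn:Eta' in *. remember (third x b') as tb' eqn:Etb' in *.
  remember (third x c') as tc' eqn:Etc' in *.
  assert (TW : noncollinear ty ta tb) by (repeat split; intro; steiner).
  pose proof (mem_span3_1 ty ta tb) as wy. pose proof (mem_span3_2 ty ta tb) as wa.
  pose proof (mem_span3_3 ty ta tb) as wb.
  assert (wa' : span3 ty ta tb ta') by (apply (closure_third_eq _ ty ta); auto; steiner).
  assert (wb' : span3 ty ta tb tb') by (apply (closure_third_eq _ ty tb); auto; steiner).
  assert (wc : span3 ty ta tb c) by (apply (closure_third_eq _ ta tb); auto; steiner).
  assert (TP : noncollinear a b x) by (repeat split; congruence).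
  (* [span3 ty ta tb] contains [ty], which is not in [span3 a b x]. *)
  assert (W_ne_P : forall a0 b0 x0, noncollinear a0 b0 x0 ->
     span3 ty ta tb a0 -> span3 ty ta tb b0 -> span3 ty ta tb x0 ->
     span3 a b x a0 -> span3 a b x b0 -> span3 a b x x0 -> False).
  { intros a0 b0 x0 T0 W1 W2 W3 P1' P2' P3'. apply Nty.
    exact (proj1 (span3_eq_of_common _ _ _ _ _ _ _ _ _ TW TP T0 W1 W2 W3 P1' P2' P3' ty) wy). }
  assert (Ntc : ~ span3 ty ta tb tc).
  { intro W. apply (W_ne_P ta tb tc); auto. repeat split; intro; steiner. }
  assert (Ntc' : ~ span3 ty ta tb tc').
  { intro W. apply Ntc. apply (closure_third_eq _ ty tc'); auto; steiner. }
  assert (T4 : noncollinear a' b' x) by (repeat split; intro; steiner).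
  destruct (span3_fano_or_affine _ _ _ T4) as [F4|F4].
  - destruct (fano_identities _ _ _ T4 F4) as [_ [R2 _]].
    assert (wc' : span3 ty ta tb c') by (apply (closure_third_eq _ ta' tb'); auto; steiner).
    assert (wyy : span3 ty ta tb y) by (apply (closure_third_eq _ c c'); auto; steiner).
    assert (wx : span3 ty ta tb x) by (apply (closure_third_eq _ y ty); auto; steiner).
    assert (wa0 : span3 ty ta tb a) by (apply (closure_third_eq _ x ta); auto; steiner).
    assert (wb0 : span3 ty ta tb b) by (apply (closure_third_eq _ x tb); auto; steiner).
    apply (W_ne_P a b x); auto.
  - destruct (affine_identities _ _ _ T4 F4) as [R1 _].
    apply Ntc'. apply (closure_third_eq _ ta' tb'); auto; steiner.
Qed.

Lemma mixed_exists_fano_join a b x y : noncollinear a b x -> fano_sized (span3 a b x) ->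
  affine_sized (span3 a b y) -> ~ span3 a b x y ->
  fano_sized (span3 a x y) \/ fano_sized (span3 b x y) \/ fano_sized (span3 (third a b) x y).
Proof.
  intros Tx FP AQ Ny.
  destruct (notin_span3_neq _ _ _ _ Ny) as [N1 [N2 [N3 [N4 [N5 N6]]]]].
  assert (N7 : y <> third x (third a b)).
  { intros ->. apply Ny, closure_third; [apply mem_span3_3 | apply closure_third];
      [apply mem_span3_1 | apply mem_span3_2]. }
  destruct (classic (fano_sized (span3 a x y))) as [F1|F1]; auto.
  destruct (classic (fano_sized (span3 b x y))) as [F2|F2]; auto.
  destruct (classic (fano_sized (span3 (third a b) x y))) as [F3|F3]; auto. exfalso.
  assert (Ty : noncollinear a b y) by (repeat split; auto; apply Tx).
  apply (fano_affine_identities_absurd a b x y Tx FP Ny (proj1 (affine_identities _ _ _ Ty AQ))).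
  intros e He. destruct Tx as [Hab [Hxa [Hxb Hxc]]].
  rewrite line_third in He. destruct He as [E|[E|E]]; subst e; apply not_fano_identity; auto;
    repeat split; auto; intro; steiner_with [third a b].
Qed.

Lemma span3_line u v u' v' z : u' <> v' -> line u v u' -> line u v v' ->
  forall t, span3 u' v' z t <-> span3 u v z t.
Proof.
  intros Nuv' H1 H2 t. split.
  - apply span3_sub; [| | apply mem_span3_3];
      (apply (closure_line _ u v); [apply mem_span3_1 | apply mem_span3_2 | auto]).
  - apply span3_sub; [| | apply mem_span3_3];
      (apply (closure_line _ u' v'); [apply mem_span3_1 | apply mem_span3_2 |]);
    rewrite line_third in H1, H2 |- *;
    destruct H1 as [E1|[E1|E1]]; destruct H2 as [E2|[E2|E2]]; steiner3.
Qed.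

Lemma fano_sized_line y u v u' v' : u' <> v' -> line u v u' -> line u v v' ->
  fano_sized (span3 u v y) -> fano_sized (span3 u' v' y).
Proof.
  intros Nuv' Hu Hv. apply fano_sized_sub.
  intro t. exact (proj1 (span3_line u v u' v' y Nuv' Hu Hv t)).
Qed.

Lemma fano_rule_identities_absurd p n n' y : noncollinear p n n' -> ~ span3 p n n' y ->
  third (third n p) (third n n') = third p n' ->
  third (third p y) (third p n) = third y n -> third (third p y) (third p n') = third y n' ->
  third (third n y) (third y n') = third y (third n n') -> False.
Proof.
  intros T Ny Q2 R1 R2 S1.
  pose proof (mem_span3_1 p n n') as mp. pose proof (mem_span3_2 p n n') as mn.
  pose proof (mem_span3_3 p n n') as mn'.
  pose proof (closure_third _ _ _ mp mn) as mm1. pose proof (closure_third _ _ _ mp mn') as mm1'.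
  pose proof (closure_third _ _ _ mn mn') as mr.
  destruct (notin_span3_neq _ _ _ _ Ny) as [N1 [N2 [N3 [N4 [N5 N6]]]]].
  assert (N7 : y <> third n n') by (intros ->; auto).
  assert (Ntp : ~ span3 p n n' (third y p)).
  { intro E. apply Ny. apply (closure_third_eq _ p (third y p)); auto. steiner. }
  destruct T as [Hpn [Hn'p [Hn'n Hn'c]]].
  remember (third p n) as m1 eqn:Em1 in *. remember (third p n') as m1' eqn:Em1' in *.
  remember (third n n') as r eqn:Er in *. remember (third y p) as tp eqn:Etp in *.
  remember (third y n) as tn eqn:Etn in *. remember (third y n') as tn' eqn:Etn' in *.
  remember (third y r) as tr eqn:Etr in *.
  assert (TR : noncollinear tp m1 m1').
  { assert (NtpP : forall z, span3 p n n' z -> tp <> z) by (intros z Hz ->; auto).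
    pose proof (NtpP _ mm1). pose proof (NtpP _ mm1'). pose proof (NtpP _ mr).
    repeat split; intro; steiner. }
  pose proof (mem_span3_1 tp m1 m1') as rp. pose proof (mem_span3_2 tp m1 m1') as rm.
  pose proof (mem_span3_3 tp m1 m1') as rm'.
  assert (rn : span3 tp m1 m1' tn)
    by (apply (closure_third_eq _ tp m1); auto; steiner).
  assert (rn' : span3 tp m1 m1' tn')
    by (apply (closure_third_eq _ tp m1'); auto; steiner).
  assert (rr : span3 tp m1 m1' r)
    by (apply (closure_third_eq _ m1 m1'); auto; steiner).
  assert (rtr : span3 tp m1 m1' tr)
    by (apply (closure_third_eq _ tn tn'); auto; steiner).
  assert (ry : span3 tp m1 m1' y)
    by (apply (closure_third_eq _ r tr); auto; steiner).
  assert (rp0 : span3 tp m1 m1' p)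
    by (apply (closure_third_eq _ y tp); auto; steiner).
  assert (T7 : noncollinear p m1 m1')
    by (repeat split; intro; steiner).
  assert (T8 : noncollinear p n n') by (repeat split; congruence).
  apply Ny.
  exact (proj1 (span3_eq_of_common _ _ _ _ _ _ _ _ _ TR T8 T7 rp0 rm rm' mp mm1 mm1' y) ry).
Qed.

Lemma fano_rule p n n' y : noncollinear p n n' -> fano_sized (span3 p n n') -> ~ span3 p n n' y ->
  fano_sized (span3 p n y) -> fano_sized (span3 p n' y) -> fano_sized (span3 n n' y).
Proof.
  intros T FP Ny F1 F2.
  destruct (notin_span3_neq _ _ _ _ Ny) as [N1 [N2 [N3 [N4 [N5 N6]]]]].
  destruct (noncollinear_perm _ _ _ T) as [_ [_ [T3 _]]].
  destruct (fano_sized_perm _ _ _ FP) as [_ [_ [FP3 _]]].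
  pose proof T as [Hpn [Hn'p [Hn'n _]]].
  assert (TA : noncollinear p n y) by (repeat split; auto).
  assert (TB : noncollinear p n' y) by (repeat split; auto).
  assert (T6 : noncollinear n n' y) by (repeat split; auto).
  destruct (span3_fano_or_affine _ _ _ T6) as [F|A]; auto. exfalso.
  apply (fano_rule_identities_absurd p n n' y T Ny).
  - apply (fano_identities _ _ _ T3 FP3).
  - apply (fano_identities _ _ _ TA F1).
  - apply (fano_identities _ _ _ TB F2).
  - apply (affine_identities _ _ _ T6 A).
Qed.

(* A Fano plane [span3 a b x] and an affine plane [span3 a b y] through a common line: call a
   line of the Fano plane good if it spans a Fano plane with [y]. Every point off [ab] lies on a
   good line through a point of [ab], two good sides of a triangle make the third side good, and
   [ab] itself is not good; in a Fano plane these three facts are incompatible. *)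
Section MixedPlanes.
Variables a b x y : X.
Hypotheses (Tx : noncollinear a b x) (FP : fano_sized (span3 a b x)).
Hypothesis AQ : affine_sized (span3 a b y).
Hypothesis Ny : ~ span3 a b x y.

Local Notation good u v := (fano_sized (span3 u v y)).

Lemma mixed_exists_fano_join_at x' : span3 a b x x' -> noncollinear a b x' ->
  good a x' \/ good b x' \/ good (third a b) x'.
Proof.
  intros Hx' T'.
  pose proof (span3_eq_of_mem _ _ _ _ _ _ Tx T' (mem_span3_1 a b x) (mem_span3_2 a b x) Hx') as E.
  apply mixed_exists_fano_join; auto.
  - apply (fano_sized_sub (span3 a b x)); auto. intro t; apply E.
  - rewrite E; auto.
Qed.

Lemma mixed_fano_rule p n n' : span3 a b x p -> span3 a b x n -> span3 a b x n' ->
  noncollinear p n n' -> good p n -> good p n' -> good n n'.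
Proof.
  intros Hp Hn Hn' T F1 F2.
  pose proof (span3_eq_of_mem _ _ _ _ _ _ Tx T Hp Hn Hn') as E.
  apply (fano_rule p); auto.
  - apply (fano_sized_sub (span3 a b x)); auto. intro t; apply E.
  - rewrite E; auto.
Qed.

Lemma mixed_no_fano_on_ab u v : u <> v -> line a b u -> line a b v -> ~ good u v.
Proof.
  intros Nuv Hu Hv F. apply (fano_affine_sized_excl (span3 a b y)); auto.
  apply (fano_sized_sub (span3 u v y)); auto. intro t.
  rewrite <- (span3_line a b u v y Nuv Hu Hv t). auto.
Qed.

Ltac fano_via_line H :=
  refine (fano_sized_line _ _ _ _ _ _ _ _ H); [intro; steiner | apply line_third; steiner3 ..].

Ltac fano_on_ab u v :=
  apply (mixed_no_fano_on_ab u v); [intro; steiner | apply line_third; steiner3 .. |].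

Ltac fano_by_rule p n n' :=
  apply (mixed_fano_rule p n n'); auto; repeat split; intro; steiner.

Section Branches.
Variables c q r s : X.
Hypotheses (Ec : c = third a b) (Eq : q = third a x) (Er : r = third x b) (Es : s = third x c).

Ltac mixed_setup :=
  pose proof (mem_span3_1 a b x) as ma; pose proof (mem_span3_2 a b x) as mb;
  pose proof (mem_span3_3 a b x) as mx;
  assert (mc : span3 a b x c) by (rewrite Ec; apply closure_third; auto);
  assert (mq : span3 a b x q) by (rewrite Eq; apply closure_third; auto);
  assert (mr : span3 a b x r) by (rewrite Er; apply closure_third; auto);
  assert (ms : span3 a b x s) by (rewrite Es; apply closure_third; auto);
  destruct (fano_identities _ _ _ Tx FP) as [P1 [P2 P3]];
  pose proof Tx as [Hab [Hxa [Hxb Hxc]]].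

Lemma mixed_absurd_through_a : good a x -> False.
Proof.
  intro Fx. mixed_setup.
  assert (Ts : noncollinear a b s) by (repeat split; intro; steiner).
  destruct (mixed_exists_fano_join_at s ms Ts) as [Fs|[Fs|Fs]]; rewrite <- ?Ec in *.
  - assert (Fxs : good x s) by fano_by_rule a x s.
    assert (Fxa : good x a) by fano_via_line Fx.
    assert (Fxc : good x c) by fano_via_line Fxs.
    fano_on_ab a c. fano_by_rule x a c.
  - assert (Fqa : good q a) by fano_via_line Fx.
    assert (Fqb : good q b) by fano_via_line Fs.
    fano_on_ab a b. fano_by_rule q a b.
  - assert (Fxa : good x a) by fano_via_line Fx.
    assert (Fxc : good x c) by fano_via_line Fs.
    fano_on_ab a c. fano_by_rule x a c.
Qed.

Lemma mixed_absurd_through_b : good b x -> False.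
Proof.
  intro Fx. mixed_setup.
  assert (Tq : noncollinear a b q) by (repeat split; intro; steiner).
  destruct (mixed_exists_fano_join_at q mq Tq) as [Fq|[Fq|Fq]]; rewrite <- ?Ec in *.
  - assert (Fxa : good x a) by fano_via_line Fq.
    assert (Fxb : good x b) by fano_via_line Fx.
    fano_on_ab a b. fano_by_rule x a b.
  - assert (Fxq : good x q) by fano_by_rule b x q.
    assert (Fxa : good x a) by fano_via_line Fxq.
    assert (Fxb : good x b) by fano_via_line Fx.
    fano_on_ab a b. fano_by_rule x a b.
  - assert (Frb : good r b) by fano_via_line Fx.
    assert (Frc : good r c) by fano_via_line Fq.
    fano_on_ab b c. fano_by_rule r b c.
Qed.

Lemma mixed_absurd_through_c : good c x -> False.
Proof.
  intro Fx. mixed_setup.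
  assert (Tq : noncollinear a b q) by (repeat split; intro; steiner).
  destruct (mixed_exists_fano_join_at q mq Tq) as [Fq|[Fq|Fq]]; rewrite <- ?Ec in *.
  - assert (Fxa : good x a) by fano_via_line Fq.
    assert (Fxc : good x c) by fano_via_line Fx.
    fano_on_ab a c. fano_by_rule x a c.
  - assert (Fsc : good s c) by fano_via_line Fx.
    assert (Fsb : good s b) by fano_via_line Fq.
    fano_on_ab b c. fano_by_rule s b c.
  - assert (Fxq : good x q) by fano_by_rule c x q.
    assert (Fxa : good x a) by fano_via_line Fxq.
    assert (Fxc : good x c) by fano_via_line Fx.
    fano_on_ab a c. fano_by_rule x a c.
Qed.

End Branches.

Lemma mixed_planes_absurd : False.
Proof.
  destruct (mixed_exists_fano_join_at x (mem_span3_3 a b x) Tx) as [F|[F|F]];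
    [apply (mixed_absurd_through_a (third a b) (third a x) (third x b) (third x (third a b)))
    | apply (mixed_absurd_through_b (third a b) (third a x) (third x b) (third x (third a b)))
    | apply (mixed_absurd_through_c (third a b) (third a x) (third x b) (third x (third a b)))];
    auto.
Qed.

End MixedPlanes.

Lemma no_mixed_planes_on_line a b x y : noncollinear a b x -> noncollinear a b y ->
  fano_sized (span3 a b x) -> affine_sized (span3 a b y) -> False.
Proof.
  intros Tx Ty FP AQ. destruct (classic (span3 a b x y)) as [Hy|Ny].
  - apply (fano_affine_sized_excl (span3 a b y)); auto.
    apply (fano_sized_sub (span3 a b x)); auto. intro t.
    apply (span3_eq_of_mem a b x a b y); auto using mem_span3_1, mem_span3_2.
  - exact (mixed_planes_absurd a b x y Tx FP AQ Ny).
Qed.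

Definition is_plane (P : X -> Prop) :=
  exists a b c, noncollinear a b c /\ forall t, P t <-> span3 a b c t.

Lemma span3_is_plane a b c : noncollinear a b c -> is_plane (span3 a b c).
Proof. intro T. exists a, b, c. split; auto. tauto. Qed.

Lemma plane_point_off_line P u v : is_plane P -> u <> v -> exists x, P x /\ noncollinear u v x.
Proof.
  intros [g1 [g2 [g3 [T E]]]] Nuv.
  assert (off : forall g, span3 g1 g2 g3 g -> ~ line u v g -> exists x, P x /\ noncollinear u v x)
    by (intros g Hg Ng; exists g; split; [apply E | apply noncollinear_of_not_line]; auto).
  destruct (classic (line u v g1)) as [L1|L1]; [|apply (off g1); auto using mem_span3_1].
  destruct (classic (line u v g2)) as [L2|L2]; [|apply (off g2); auto using mem_span3_2].
  destruct (classic (line u v g3)) as [L3|L3]; [|apply (off g3); auto using mem_span3_3].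
  exfalso. rewrite line_third in L1, L2, L3. destruct T as [T1 [T2 [T3 T4]]].
  destruct L1 as [E1|[E1|E1]]; destruct L2 as [E2|[E2|E2]]; destruct L3 as [E3|[E3|E3]];
    steiner.
Qed.

Lemma plane_eq_span3 P u v x : is_plane P -> noncollinear u v x -> P u -> P v -> P x ->
  forall t, P t <-> span3 u v x t.
Proof.
  intros [g1 [g2 [g3 [T E]]]] Tx Hu Hv Hx t. rewrite E in Hu, Hv, Hx |- *.
  rewrite (span3_eq_of_mem _ _ _ _ _ _ T Tx Hu Hv Hx t). tauto.
Qed.

Lemma plane_other_point P z : is_plane P -> exists u, P u /\ u <> z.
Proof.
  intros [g1 [g2 [g3 [[Hg12 _] E]]]].
  destruct (classic (g1 = z)) as [<-|N].
  - exists g2. split; [apply E, mem_span3_2 | auto].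
  - exists g1. split; [apply E, mem_span3_1 | auto].
Qed.

Lemma no_mixed_planes_on_common_line P Q u v : is_plane P -> is_plane Q ->
  fano_sized P -> affine_sized Q -> P u -> P v -> Q u -> Q v -> u <> v -> False.
Proof.
  intros HP HQ FP AQ Pu Pv Qu Qv Nuv.
  destruct (plane_point_off_line P u v HP Nuv) as [x [Px Tx]].
  destruct (plane_point_off_line Q u v HQ Nuv) as [y [Qy Ty]].
  apply (no_mixed_planes_on_line u v x y Tx Ty).
  - apply (fano_sized_sub P); auto. intro t. apply (plane_eq_span3 P u v x); auto.
  - apply (affine_sized_sup Q); auto. intro t. apply (plane_eq_span3 Q u v y); auto.
Qed.

Lemma no_mixed_planes_on_common_point P Q z : is_plane P -> is_plane Q ->
  fano_sized P -> affine_sized Q -> P z -> Q z -> False.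
Proof.
  intros HP HQ FP AQ Pz Qz.
  destruct (plane_other_point P z HP) as [u [Pu Nu]].
  destruct (plane_other_point Q z HQ) as [w [Qw Nw]].
  destruct (classic (line z u w)) as [Lw|Lw].
  - assert (Qu : Q u).
    { destruct HQ as [h1 [h2 [h3 [_ E]]]]. apply E. apply E in Qz, Qw.
      rewrite line_third in Lw. destruct Lw as [? | [-> | ->]]; [congruence | auto |].
      apply (closure_third_eq _ z (third z u)); auto. steiner. }
    exact (no_mixed_planes_on_common_line P Q z u HP HQ FP AQ Pz Pu Qz Qu (not_eq_sym Nu)).
  - assert (T : noncollinear z u w) by (apply noncollinear_of_not_line; auto).
    destruct (span3_fano_or_affine _ _ _ T) as [F|A].
    + apply (no_mixed_planes_on_common_line (span3 z u w) Q z w); auto using span3_is_plane,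
        mem_span3_1, mem_span3_3.
    + apply (no_mixed_planes_on_common_line P (span3 z u w) z u); auto using span3_is_plane,
        mem_span3_1, mem_span3_2.
Qed.

Lemma no_mixed_planes P Q : is_plane P -> is_plane Q -> fano_sized P -> affine_sized Q -> False.
Proof.
  intros HP HQ FP AQ.
  pose proof HP as [g1 [g2 [g3 [Tg Eg]]]]. pose proof HQ as [h1 [h2 [h3 [Th Eh]]]].
  assert (Pg : P g1) by apply Eg, mem_span3_1.
  assert (Qh : Q h1) by apply Eh, mem_span3_1.
  destruct (classic (g1 = h1)) as [<-|N].
  - exact (no_mixed_planes_on_common_point P Q g1 HP HQ FP AQ Pg Qh).
  - destruct (plane_point_off_line P g1 h1 HP N) as [x [Px Tx]].
    destruct (span3_fano_or_affine _ _ _ Tx) as [F|A].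
    + apply (no_mixed_planes_on_common_point (span3 g1 h1 x) Q h1); auto using span3_is_plane,
        mem_span3_2.
    + apply (no_mixed_planes_on_common_line P (span3 g1 h1 x) g1 x); auto using span3_is_plane,
        mem_span3_1, mem_span3_3.
      apply not_eq_sym, Tx.
Qed.

Lemma planes_all_fano_or_all_affine :
  (forall a b c, noncollinear a b c -> fano_sized (span3 a b c)) \/
  (forall a b c, noncollinear a b c -> affine_sized (span3 a b c)).
Proof.
  destruct (classic (exists a b c, noncollinear a b c /\ affine_sized (span3 a b c)))
    as [[a [b [c [T A]]]]|N].
  - right. intros a' b' c' T'. destruct (span3_fano_or_affine _ _ _ T') as [F|A']; auto.
    exfalso. apply (no_mixed_planes (span3 a' b' c') (span3 a b c)); auto using span3_is_plane.
  - left. intros a b c T. destruct (span3_fano_or_affine _ _ _ T) as [F|A]; auto.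
    exfalso. apply N. exists a, b, c. auto.
Qed.

Lemma fano_lines_meet a b p : noncollinear a b p -> fano_sized (span3 a b p) ->
  forall m, span3 a b p m -> m <> p -> exists z, line p m z /\ line a b z.
Proof.
  intros T F m Hm Nmp. pose proof (frame_of a b p T) as Fr.
  destruct (frame_dichotomy _ _ _ _ _ _ _ _ _ Fr) as [[E1 E2]|[E1 E2]].
  2:{ exfalso. exact (fano_affine_sized_excl _ F (frame_affine_sized _ _ _ _ _ _ _ _ _ Fr E1 E2)). }
  destruct (frame_fano _ _ _ _ _ _ _ _ _ Fr E1 E2) as [_ Hin].
  specialize (Hin m Hm). destruct T as [Hab [Hpa [Hpb Hpc]]].
  destruct Hin as [<-|[<-|[<-|[<-|[<-|[<-|[<-|[]]]]]]]];
  let close z := exists z; rewrite !line_third;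
    split; steiner3_with [third a b; third a p; third p b; third p (third a b)] in
  first [close a | close b | close (third a b)].
Qed.

Lemma affine_parallel a b p : noncollinear a b p -> affine_sized (span3 a b p) ->
  exists m0, span3 a b p m0 /\ m0 <> p /\ (forall z, line p m0 z -> ~ line a b z) /\
    (forall m, span3 a b p m -> m <> p -> (forall z, line p m z -> ~ line a b z) -> line p m0 m).
Proof.
  intros T A. pose proof (frame_of a b p T) as Fr.
  destruct (frame_dichotomy _ _ _ _ _ _ _ _ _ Fr) as [[E1 E2]|[E1 E2]].
  { exfalso. exact (fano_affine_sized_excl _ (frame_fano_sized _ _ _ _ _ _ _ _ _ Fr E1 E2) A). }
  destruct (frame_affine _ _ _ _ _ _ _ _ _ Fr E1 E2) as [E3 [E4 ND]].
  pose proof (span3_frame_points _ _ _ _ _ _ _ _ _ Fr) as P9.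
  destruct (frame_mem_span3 _ _ _ _ _ _ _ _ _ Fr) as [mc [mq [mr [ms [mu mw]]]]].
  remember (third a b) as c eqn:Ec in *. remember (third a p) as q eqn:Eq in *.
  remember (third p b) as r eqn:Er in *. remember (third p c) as s eqn:Es in *.
  remember (third q b) as u eqn:Eu in *. remember (third q c) as w eqn:Ew in *.
  repeat (let Hn := fresh "Hn" in apply NoDup_cons_iff in ND; destruct ND as [Hn ND];
    simpl in Hn; repeat (let K := fresh "K" in apply not_or_and in Hn; destruct Hn as [K Hn])).
  exists u. split; [auto|]. split; [intro; steiner|]. split.
  - intros z Hz Hz'. rewrite line_third in Hz, Hz'.
    destruct Hz as [?|[?|?]]; destruct Hz' as [?|[?|?]]; steiner.
  - intros m Hm Nm Hd. rewrite line_third.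
    pose proof (P9 m Hm) as M9. case9 M9;
    first [ steiner3
          | exfalso; apply (Hd m); rewrite line_third; [auto | right; right; steiner]
          | let meet z := exfalso; apply (Hd z); rewrite line_third; steiner3 in
            first [meet a | meet b | meet c] ].
Qed.

Lemma plane_eq_span3_line P L x : plane X lines P -> lines L -> subset X L P -> P x -> ~ L x ->
  exists l1 l2, noncollinear l1 l2 x /\ (forall t, P t <-> span3 l1 l2 x t) /\
    (forall t, L t <-> line l1 l2 t).
Proof.
  intros [HF [[l [ND [Hlen Hsub]]] Hmin]] HL HLP Px NLx.
  destruct l as [|g1 [|g2 [|g3 [|g4 l]]]]; simpl in Hlen; try lia.
  apply NoDup_cons_iff in ND as [N1 ND]. apply NoDup_cons_iff in ND as [N2 _].
  simpl in N1, N2.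
  assert (Hsub' : subset X P (span3 g1 g2 g3)).
  { intros z Pz. refine (closure_mono _ _ _ z (Hsub z Pz)).
    intros w [-> | [-> | [-> | []]]]; apply closure_incl; auto. }
  assert (Tg : noncollinear g1 g2 g3).
  { repeat split; try (intro; subst; tauto). intro E.
    apply (Hmin [g1; g2]); [simpl; lia|]. intros z Pz. refine (closure_mono _ _ _ z (Hsub' z Pz)).
    intros w [-> | [-> | ->]]; [| | rewrite E; apply closure_third];
      apply closure_incl; simpl; auto. }
  destruct (line_two_points L HL) as [l1 [l2 [N12 [L1 L2]]]].
  pose proof (line_iff L l1 l2 HL L1 L2 N12) as EL.
  assert (Tl : noncollinear l1 l2 x) by (apply noncollinear_of_not_line; [|rewrite <- EL]; auto).
  exists l1, l2. split; [exact Tl|]. split; [|exact EL]. intro t. split.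
  - intro Pt. apply (span3_eq_of_mem g1 g2 g3 l1 l2 x Tg Tl); auto.
  - apply closure_min; auto. intros w [-> | [-> | ->]]; auto.
Qed.

Lemma fano_zero_parallel :
  (forall a b c, noncollinear a b c -> fano_sized (span3 a b c)) -> k_parallel X lines 0.
Proof.
  intros HF P L x HP HL HLP Px NLx.
  destruct (plane_eq_span3_line P L x HP HL HLP Px NLx) as [l1 [l2 [T [EP EL]]]].
  exists []. split; [reflexivity|]. split; [intros M []|]. split; [constructor|].
  intros M [HM [Mx MS]]. exfalso.
  destruct (line_other_point M x HM) as [m [Mm Nm]].
  pose proof (line_iff M x m HM Mx Mm (not_eq_sym Nm)) as EM.
  destruct (fano_lines_meet l1 l2 x T (HF _ _ _ T) m (proj1 (EP m) (proj1 (MS m Mm))) Nm)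
    as [z [Z1 Z2]].
  apply EM, MS in Z1. apply (proj2 Z1), EL, Z2.
Qed.

Lemma affine_one_parallel :
  (forall a b c, noncollinear a b c -> affine_sized (span3 a b c)) -> k_parallel X lines 1.
Proof.
  intros HA P L x HP HL HLP Px NLx.
  destruct (plane_eq_span3_line P L x HP HL HLP Px NLx) as [l1 [l2 [T [EP EL]]]].
  destruct (affine_parallel l1 l2 x T (HA _ _ _ T)) as [m0 [Hm0 [Nm0 [Disj Uniq]]]].
  destruct (line_of_neq x m0 (not_eq_sym Nm0)) as [M0 [HM0 [M0x [M0m E0]]]].
  exists [M0]. split; [reflexivity|]. split.
  { intros M [<-|[]]. split; [|split]; auto. intros t Ht. apply E0 in Ht. split.
    - apply EP. exact (closure_line _ x m0 t (mem_span3_3 _ _ _) Hm0 Ht).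
    - intro Lt. apply EL in Lt. apply (Disj t); auto. }
  split; [repeat constructor|].
  intros M [HM [Mx MS]]. exists M0. split; [simpl; auto|].
  destruct (line_other_point M x HM) as [m [Mm Nm]].
  pose proof (line_iff M x m HM Mx Mm (not_eq_sym Nm)) as EM.
  assert (K : line x m0 m).
  { apply Uniq; [exact (proj1 (EP m) (proj1 (MS m Mm))) | auto |].
    intros z Z1 Z2. apply EM, MS in Z1. apply (proj2 Z1), EL, Z2. }
  apply E0 in K. exact (line_unique M M0 x m HM HM0 Mx Mm M0x K (not_eq_sym Nm)).
Qed.

Lemma fano_projective :
  (forall a b c, noncollinear a b c -> fano_sized (span3 a b c)) -> projective X lines.
Proof.
  intros HF o x y p v Hp Hv Nvp.
  destruct (classic (noncollinear o x y)) as [T|T].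
  - assert (mp : span3 o x y p)
      by exact (closure_line _ x y p (mem_span3_2 _ _ _) (mem_span3_3 _ _ _) Hp).
    assert (mv : span3 o x y v)
      by exact (closure_line _ o y v (mem_span3_1 _ _ _) (mem_span3_3 _ _ _) Hv).
    destruct (classic (line o x v)) as [Ov|Ov]; [exists v; split; auto using line_l|].
    assert (Tv : noncollinear o x v) by (apply noncollinear_of_not_line; auto; apply T).
    pose proof (span3_eq_of_mem o x y o x v T Tv (mem_span3_1 _ _ _) (mem_span3_2 _ _ _) mv) as E.
    destruct (fano_lines_meet o x v Tv (HF _ _ _ Tv) p (proj2 (E p) mp) (not_eq_sym Nvp))
      as [z [Z1 Z2]].
    exists z. split; auto.
  - assert (K : o = x \/ y = o \/ y = x \/ y = third o x).
    { apply NNPP; intro K. apply T. repeat split; intro; apply K; auto. }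
    rewrite line_third in Hp, Hv.
    destruct K as [->|K].
    + exists x. split; [|apply line_l]. rewrite line_third.
      destruct Hp as [E1|[E1|E1]]; destruct Hv as [E2|[E2|E2]]; steiner3.
    + exists v. split; [apply line_l|]. rewrite line_third.
      destruct K as [K|[K|K]]; destruct Hv as [E2|[E2|E2]]; steiner3.
Qed.

Lemma affine_line_meets_parallel p m o x y : noncollinear p m o -> affine_sized (span3 p m o) ->
  span3 p m o x -> span3 p m o y -> x <> o -> y <> o -> ~ line o x y ->
  (forall z, line p m z -> ~ line o x z) -> exists u, line o y u /\ line p m u.
Proof.
  intros T A Hx Hy Nxo Nyo Nxy Disj. apply NNPP; intro NE.
  destruct (affine_parallel p m o T A) as [m1 [_ [Nm1 [_ Uniq]]]].
  assert (Kx : line o m1 x) by (apply Uniq; auto; intros z Z1 Z2; apply (Disj z); auto).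
  assert (Ky : line o m1 y) by (apply Uniq; auto; intros z Z1 Z2; apply NE; exists z; auto).
  apply Nxy. apply (line_eq_of_common o x o m1 o x y); auto using line_l, line_r.
Qed.

Lemma affine_witness_on_line o x y p : o <> y -> line o y p -> ~ line o x p ->
  forall v, line o y v -> (p = v <-> ~ exists z, line v p z /\ line o x z).
Proof.
  intros Noy Hp Np v Hv. split.
  - intros <- [z [Z1 Z2]]. rewrite line_third, third_diag in Z1.
    apply Np. destruct Z1 as [<-|[<-|<-]]; auto.
  - intro NE. apply NNPP; intro Npv. apply NE. exists o. split; [|apply line_l].
    apply (line_eq_of_common v p o y v p o); auto using line_l, line_r.
Qed.

Lemma affine_witness_off_line o x y p :
  (forall a b c, noncollinear a b c -> affine_sized (span3 a b c)) ->
  noncollinear o x y -> line x y p -> ~ line o x p -> ~ line o y p ->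
  exists u, line o y u /\ forall v, line o y v -> (u = v <-> ~ exists z, line v p z /\ line o x z).
Proof.
  intros HA T Hp Np Npy.
  assert (mp : span3 o x y p)
      by exact (closure_line _ x y p (mem_span3_2 _ _ _) (mem_span3_3 _ _ _) Hp).
  assert (Tp : noncollinear o x p) by (apply noncollinear_of_not_line; auto; apply T).
  pose proof (span3_eq_of_mem o x y o x p T Tp (mem_span3_1 _ _ _) (mem_span3_2 _ _ _) mp) as EP.
  destruct (affine_parallel o x p Tp (HA _ _ _ Tp)) as [m0 [Hm0 [Nm0 [Disj Uniq]]]].
  assert (Ho : ~ line p m0 o) by (intro H; apply (Disj o H), line_l).
  assert (Tm : noncollinear p m0 o) by (apply noncollinear_of_not_line; auto).
  assert (E2 : forall t, span3 p m0 o t <-> span3 o x p t)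
    by (apply span3_eq_of_mem; auto using mem_span3_1, mem_span3_3).
  assert (Hx : span3 p m0 o x) by apply E2, mem_span3_2.
  assert (Hy : span3 p m0 o y) by apply E2, EP, mem_span3_3.
  assert (Nxy : ~ line o x y)
    by (destruct T as [? [? [? ?]]]; rewrite line_third; intros [?|[?|?]]; congruence).
  destruct (affine_line_meets_parallel p m0 o x y Tm (HA _ _ _ Tm) Hx Hy
    (not_eq_sym (proj1 T)) (proj1 (proj2 T)) Nxy Disj) as [u [Hu1 Hu2]].
  assert (Nup : u <> p) by (intros ->; auto).
  exists u. split; [exact Hu1|]. intros v Hv. split.
  - intros <- [z [Z1 Z2]]. apply (Disj z); auto.
    apply (line_eq_of_common p m0 u p u p z); auto using line_l, line_r.
  - intro NE. apply NNPP; intro Nuv.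
    assert (Nvp : v <> p) by (intros ->; auto).
    assert (K : line p m0 v).
    { apply Uniq; auto;
        [apply EP; exact (closure_line _ o y v (mem_span3_1 _ _ _) (mem_span3_3 _ _ _) Hv)|].
      intros z Z1 Z2. apply NE. exists z. split; auto. apply line_sym; auto. }
    apply Ho. apply (line_eq_of_common p m0 o y u v o); auto using line_l.
    exact (not_eq_sym (proj1 (proj2 T))).
Qed.

Lemma all_affine_affine :
  (forall a b c, noncollinear a b c -> affine_sized (span3 a b c)) -> affine X lines.
Proof.
  intros HA o x y p Hp Np.
  destruct (classic (o = x)) as [<-|Nox].
  { assert (Noy : o <> y) by (intros <-; apply Np; exact Hp).
    exists p. split; auto. apply affine_witness_on_line; auto. }
  destruct (classic (line o x y)) as [Ly|Ly].
  { exfalso. apply Np. rewrite line_third in Ly, Hp |- *.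
    destruct Ly as [E|[E|E]]; destruct Hp as [E'|[E'|E']]; steiner3. }
  assert (T : noncollinear o x y) by (apply noncollinear_of_not_line; auto).
  destruct (classic (line o y p)) as [Hpy|Hpy].
  - exists p. split; auto. apply affine_witness_on_line; auto. apply not_eq_sym, T.
  - exact (affine_witness_off_line o x y p HA T Hp Np Hpy).
Qed.

End SteinerLiner.

Theorem theorem4p2p7 (X : Type) (lines : (X -> Prop) -> Prop) :
  is_liner X lines -> steiner X lines -> regular3 X lines ->
  (exists p : nat, (p = 0 \/ p = 1) /\ k_parallel X lines p) /\
  (projective X lines \/ affine X lines).
Proof.
  intros HL HS HR.
  destruct (planes_all_fano_or_all_affine X lines HL HS HR) as [F|A].
  - split; [exists 0; split; [left; reflexivity|] | left];
      [eapply fano_zero_parallel | eapply fano_projective]; eauto.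
  - split; [exists 1; split; [right; reflexivity|] | right];
      [eapply affine_one_parallel | eapply all_affine_affine]; eauto.
Qed.
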